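(* Let $E$ be a finite set of events with timestamps $\tau(e)\in\mathbb{R}$, let $t_w>0$ be real and $n\ge1$ an integer, and let $\mathcal{I}$ be the family of all $T\subseteq E$ such that $|\{e\in T:\tau(e)\in[t,t+t_w)\}|\le n$ for every $t\in\mathbb{R}$. Let $T\in\mathcal{I}$ and $a\in E$ with $T\cup\{a\}\notin\mathcal{I}$. Then $|\{e\in T:\tau(e)\in(\tau(a)-t_w,\tau(a)+t_w)\}|\ge n$.
   Context: In the paper, an element $a$ with $T\in\mathcal{I}$ but $T\cup\{a\}\notin\mathcal{I}$ is called blocked in $T$, and $(\tau(a)-t_w,\tau(a)+t_w)$ is called the ball around $a$. *)

From mathcomp Require Import all_boot all_order all_algebra.
Set Implicit Arguments. Unset Strict Implicit. Unset Printing Implicit Defensive.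
Import Order.TTheory GRing.Theory Num.Theory.
Local Open Scope ring_scope.

Definition indep (R : realFieldType) (E : finType) (tau : E -> R)
  (tw : R) (n : nat) (T : {set E}) : Prop :=
  forall t : R, (#|[set e in T | ((t <= tau e) && (tau e < t + tw))%R]| <= n)%N.

From Stdlib Require Import Classical.
From mathcomp Require Import all_boot all_order all_algebra.
Import Order.TTheory GRing.Theory Num.Theory.
Set Implicit Arguments. Unset Strict Implicit. Unset Printing Implicit Defensive.
Local Open Scope ring_scope.

(* A window [[t, t + tw)] witnessing that [a |: T] is not independent must
   contain [a] (otherwise it would also witness it for [T]) and at least [n]
   events of [T]; all of these lie within distance [tw] of [tau a]. *)

Lemma window_closeness (R : realFieldType) (t tw x y : R) :
  t <= x < t + tw -> t <= y < t + tw -> x - tw < y < x + tw.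
Proof.
case/andP=> tx xt /andP[ty yt]; apply/andP; split.
  by rewrite ltrBlDr (lt_le_trans xt) // lerD2r.
by rewrite (lt_le_trans yt) // lerD2r.
Qed.

Section Windows.
Variables (R : realFieldType) (E : finType) (tau : E -> R) (tw : R).

Definition window (T : {set E}) (t : R) : {set E} :=
  [set e in T | (t <= tau e) && (tau e < t + tw)].

Lemma window_setU1 (a : E) (T : {set E}) (t : R) :
  window (a |: T) t \subset a |: window T t.
Proof.
apply/subsetP=> e; rewrite !inE => /andP[/orP[-> //|eT] et].
by rewrite eT et orbT.
Qed.

Lemma card_window_setU1 (a : E) (T : {set E}) (t : R) :
  (#|window (a |: T) t| <= #|window T t|.+1)%N.
Proof.
apply: leq_trans (subset_leq_card (window_setU1 a T t)) _.
by rewrite cardsU1 -add1n leq_add2r leq_b1.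
Qed.

Lemma window_setU1_notin (a : E) (T : {set E}) (t : R) :
  ~~ ((t <= tau a) && (tau a < t + tw)) -> window (a |: T) t = window T t.
Proof.
move=> at_out; apply/setP=> e; rewrite !inE.
by case: eqP => [-> | _]; rewrite ?(negbTE at_out) ?andbF.
Qed.

Lemma not_indepP (n : nat) (T : {set E}) :
  ~ indep tau tw n T -> exists t, (n < #|window T t|)%N.
Proof.
move=> notT; apply: not_all_not_ex => small; apply: notT => t.
by rewrite leqNgt; apply/negP; apply: small.
Qed.

Lemma window_sub_ball (T : {set E}) (t x : R) :
  t <= x < t + tw ->
  window T t \subset [set e in T | (x - tw < tau e) && (tau e < x + tw)].
Proof.
move=> xt; apply/subsetP=> e; rewrite !inE => /andP[-> et].
exact: window_closeness xt et.
Qed.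

End Windows.

Theorem lemma2 (R : realFieldType) (E : finType) (tau : E -> R) (tw : R)
  (n : nat) (T : {set E}) (a : E) :
  0 < tw -> (1 <= n)%N ->
  indep tau tw n T -> ~ indep tau tw n (a |: T) ->
  (n <= #|[set e in T | ((tau a - tw < tau e) && (tau e < tau a + tw))%R]|)%N.
Proof.
move=> _ _ indepT /not_indepP[t big].
have [a_in | a_out] := boolP ((t <= tau a) && (tau a < t + tw)); last first.
  by move: big; rewrite window_setU1_notin // ltnNge indepT.
have nT : (n <= #|window tau tw T t|)%N.
  by rewrite -ltnS (leq_trans big) // card_window_setU1.
apply: (leq_trans nT); apply: subset_leq_card.
exact: window_sub_ball a_in.
Qed.
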